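(* Let $k>1$, $n=k-1$, $N=2n+1$, and let $m_1,\dots,m_k$ be positive integers with $M=\mathrm{diag}(m_1,\dots,m_k)$. Let $P\in\mathbb{R}^{N\times k}$ be the deterministic transition matrix in which, for each $\ell\in[k-1]$, the row of the intervention $do(X^0_\ell=1)$ is the $\ell$-th standard basis vector $e_\ell$, and the rows of all the other $N-(k-1)$ interventions equal $e_k$. Then $$\lambda:=\min_{f}\left\|PM^{1/2}(P^\top f)^{\circ-1/2}\right\|_\infty^2=\sum_{\ell\in[k]}m_\ell,$$ the minimum being over frequency vectors $f$.
   Context: A frequency vector is $f\in\mathbb{R}^N$ with $f\ge0$ and $\sum_a f_a=1$. For a vector $x$ with nonnegative entries, $x^{\circ-1/2}$ is the vector with entries $x_i^{-1/2}$ (interpreted as $+\infty$ when $x_i=0$). Rows of $P$ are indexed by the $N$ atomic interventions at state $0$, namely $do()$ and $do(X^0_j=0),do(X^0_j=1)$ for $j\in[n]$; columns by the intermediate states $[k]$. *)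

From mathcomp Require Import all_boot all_order all_algebra.
From mathcomp Require Import reals constructive_ereal.
Set Implicit Arguments. Unset Strict Implicit. Unset Printing Implicit Defensive.
Import Order.TTheory GRing.Theory Num.Theory.
Local Open Scope ring_scope.

(* Atomic interventions at state 0 with n variables:
   None          == do()
   Some (j, b)   == do(X^0_j = b), j : 'I_n, b : bool. There are 2n+1 of them. *)
Definition interv (n : nat) : finType := option ('I_n * bool)%type.

(* The deterministic transition matrix P (rows: interventions, columns [k],
   column l (0-based) corresponds to intermediate state l+1). *)
Definition transP (R : nzRingType) (k : nat) (a : interv k.-1) (l : 'I_k) : R :=
  match a with
  | Some (j, true) => (nat_of_ord l == nat_of_ord j)%:R
  | _ => (nat_of_ord l == k.-1)%:R
  end.

Definition is_freq (R : numDomainType) (I : finType) (f : I -> R) : Prop :=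
  (forall a, 0 <= f a) /\ \sum_a f a = 1.

Definition inv_sqrt_e (R : rcfType) (x : R) : \bar R :=
  if x == 0 then +oo%E else ((Num.sqrt x)^-1)%:E.

Local Open Scope ereal_scope.

(* || P M^{1/2} (P^T f)^{o-1/2} ||_oo ^ 2, as an extended real,
   with the convention 0 * (+oo) = 0. *)
Definition objective (R : rcfType) (I : finType) (k : nat)
  (P : I -> 'I_k -> R) (m : 'I_k -> nat) (f : I -> R) : \bar R :=
  let g := fun l : 'I_k => (\sum_a P a l * f a)%R in
  let v := fun l : 'I_k => (Num.sqrt (m l)%:R)%:E * inv_sqrt_e (g l) in
  let w := fun a : I => \sum_(l < k) (P a l)%:E * v l in
  let nrm := \big[maxe/0]_(a : I) `| w a | in
  nrm * nrm.

(* The transition matrix is deterministic and every state is reached, so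
   [(P^T f)_l] is the mass that [f] puts on the interventions leading to [l],
   and the objective is [max_l m_l / (P^T f)_l].  If [lambda] is this maximum,
   then [m_l <= lambda (P^T f)_l] for all [l]; summing over [l] gives
   [sum_l m_l <= lambda], with equality when [(P^T f)_l = m_l / sum_l m_l]. *)
From mathcomp Require Import all_boot all_order all_algebra.
From mathcomp Require Import reals constructive_ereal.
Import Order.TTheory GRing.Theory Num.Theory.
Local Open Scope ring_scope.
Set Implicit Arguments. Unset Strict Implicit.

Section DeterministicTransition.
Variables (R : rcfType) (I : finType) (k : nat).
Variables (P : I -> 'I_k -> R) (state : I -> 'I_k) (witness : 'I_k -> I).
Hypothesis PE : forall a l, P a l = (l == state a)%:R.
Hypothesis witnessK : cancel witness state.
Variable m : 'I_k -> nat.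
Hypothesis m_gt0 : forall l, (0 < m l)%N.
Let total : R := (\sum_l m l)%N%:R.
Implicit Types f : I -> R.

Definition load (f : I -> R) (l : 'I_k) : R := \sum_(a | state a == l) f a.

Definition weight (f : I -> R) (l : 'I_k) : \bar R :=
  ((Num.sqrt (m l)%:R)%:E * inv_sqrt_e (load f l))%E.

Lemma sum_Pf f l : \sum_a P a l * f a = load f l.
Proof.
rewrite /load [RHS]big_mkcond /=; apply: eq_bigr => a _.
by rewrite PE eq_sym; case: eqP; rewrite ?mul1r ?mul0r.
Qed.

Lemma sum_load f : \sum_l load f l = \sum_a f a.
Proof. by rewrite (partition_big state xpredT). Qed.

Lemma load_ge0 f : (forall a, 0 <= f a) -> forall l, 0 <= load f l.
Proof. by move=> f_ge0 l; apply: sumr_ge0. Qed.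

Lemma weight_ge0 f l : (0 <= weight f l)%E.
Proof.
apply: mule_ge0; first by rewrite lee_fin sqrtr_ge0.
rewrite /inv_sqrt_e; case: ifP => _; first exact: leey.
by rewrite lee_fin invr_ge0 sqrtr_ge0.
Qed.

Definition max_weight f : \bar R := (\big[maxe/0%E]_a weight f (state a))%E.

Lemma sum_row (v : 'I_k -> \bar R) a : (\sum_l (P a l)%:E * v l)%E = v (state a).
Proof.
rewrite (bigD1 (state a)) //= big1 ?adde0; first by rewrite PE eqxx mul1e.
by move=> l /negbTE state_l; rewrite PE state_l mul0e.
Qed.

Lemma objectiveE f : objective P m f = (max_weight f * max_weight f)%E.
Proof.
rewrite /objective /=; congr (_ * _)%E; apply: eq_bigr => a _;
  by rewrite sum_row sum_Pf -/(weight f (state a)) gee0_abs ?weight_ge0.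
Qed.

Lemma max_weight_ge0 f : (0 <= max_weight f)%E.
Proof. exact: bigmax_ge_id. Qed.

Lemma weight_le_max f l : (weight f l <= max_weight f)%E.
Proof. by rewrite -{1}(witnessK l); exact: (le_bigmax _ (fun a => weight f (state a))). Qed.

Lemma weight_le_fin f l (x : R) : (forall a, 0 <= f a) ->
  (weight f l <= x%:E)%E -> (m l)%:R <= x ^+ 2 * load f l.
Proof.
move=> f_ge0; have sqrt_m_gt0 : 0 < Num.sqrt (m l)%:R :> R by rewrite sqrtr_gt0 ltr0n.
rewrite /weight /inv_sqrt_e; case: ifP => [_|load_neq0].
  by rewrite gt0_muley ?lee_fin // leNgt ltey.
have load_gt0 : 0 < load f l by rewrite lt_def load_neq0 load_ge0.
have sqrt_load_gt0 : 0 < Num.sqrt (load f l) by rewrite sqrtr_gt0.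
rewrite -EFinM lee_fin ler_pdivrMr // => le_sqrt.
rewrite -(sqr_sqrtr (ler0n R (m l))) -(sqr_sqrtr (ltW load_gt0)) -exprMn.
rewrite ler_pXn2r ?nnegrE ?mulr_ge0 ?sqrtr_ge0 //.
by rewrite -(pmulr_lge0 _ sqrt_load_gt0) (le_trans _ le_sqrt) ?ltW.
Qed.

Lemma objective_ge f : is_freq f -> (total%:E <= objective P m f)%E.
Proof.
move=> [f_ge0 sum_f]; rewrite objectiveE.
have := max_weight_ge0 f; case E : (max_weight f) => [x| |] //= x_ge0; last by rewrite mulyy leey.
rewrite -EFinM lee_fin /total natr_sum -(mulr1 (x * x)) -[in X in _ <= X]sum_f.
rewrite -sum_load mulr_sumr; apply: ler_sum => l _.
by rewrite -expr2 weight_le_fin // -E weight_le_max.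
Qed.

Hypothesis k_gt0 : (0 < k)%N.

Lemma total_gt0 : 0 < total.
Proof. by rewrite ltr0n (bigD1 (Ordinal k_gt0)) //= addn_gt0 m_gt0. Qed.

Definition optimal_freq (a : I) : R :=
  if a == witness (state a) then (m (state a))%:R / total else 0.

Lemma load_optimal_freq l : load optimal_freq l = (m l)%:R / total.
Proof.
rewrite /load (bigD1 (witness l)) ?witnessK //= big1 ?addr0.
  by rewrite /optimal_freq witnessK eqxx.
by move=> a /andP[/eqP <- /negbTE not_witness]; rewrite /optimal_freq not_witness.
Qed.

Lemma is_freq_optimal_freq : is_freq optimal_freq.
Proof.
split=> [a|].
  by rewrite /optimal_freq; case: ifP => _ //; rewrite divr_ge0 ?ler0n // ltW // total_gt0.
rewrite -sum_load; under eq_bigr do rewrite load_optimal_freq.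
by rewrite -mulr_suml -natr_sum divff // gt_eqF ?total_gt0.
Qed.

Lemma weight_optimal_freq l : weight optimal_freq l = (Num.sqrt total)%:E.
Proof.
have ml_gt0 : 0 < (m l)%:R :> R by rewrite ltr0n.
rewrite /weight load_optimal_freq /inv_sqrt_e mulf_eq0 invr_eq0 (gt_eqF ml_gt0).
rewrite (gt_eqF total_gt0) /= -EFinM sqrtrM ?ler0n // sqrtrV ?ltW ?total_gt0 //.
by rewrite invfM invrK mulrA divff ?mul1r // gt_eqF // sqrtr_gt0.
Qed.

Lemma objective_optimal_freq : objective P m optimal_freq = total%:E.
Proof.
have max_weight_opt : max_weight optimal_freq = (Num.sqrt total)%:E.
  rewrite -(weight_optimal_freq (Ordinal k_gt0)); apply/le_anti/andP; split.
    by apply: bigmax_le => [|a _]; rewrite ?weight_ge0 // !weight_optimal_freq.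
  exact: weight_le_max.
by rewrite objectiveE max_weight_opt -EFinM -expr2 sqr_sqrtr // ltW ?total_gt0.
Qed.

Theorem min_objective_deterministic :
  (exists f, is_freq f /\ objective P m f = total%:E) /\
  (forall f, is_freq f -> (total%:E <= objective P m f)%E).
Proof.
split; last exact: objective_ge.
by exists optimal_freq; split; [exact: is_freq_optimal_freq | exact: objective_optimal_freq].
Qed.

End DeterministicTransition.

Definition interv_state (n : nat) (a : interv n) : 'I_n.+1 :=
  if a is Some (j, true) then lift ord_max j else ord_max.

Definition interv_witness (n : nat) (l : 'I_n.+1) : interv n :=
  if unlift ord_max l is Some j then Some (j, true) else None.

Lemma interv_witnessK (n : nat) : cancel (@interv_witness n) (@interv_state n).
Proof. by move=> l; rewrite /interv_witness; case: unliftP => [j ->|->]. Qed.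

Lemma transPE (R : nzRingType) (n : nat) (a : interv n) (l : 'I_n.+1) :
  @transP R n.+1 a l = (l == interv_state a)%:R.
Proof.
case: a => [[j [|]]|] //=; congr (_%:R); rewrite -val_eqE //=.
by rewrite /bump leqNgt ltn_ord.
Qed.

Theorem proposition4 (R : realType) (k : nat) (hk : (1 < k)%N)
  (m : 'I_k -> nat) (hm : forall l, (0 < m l)%N) :
  (exists f : interv k.-1 -> R,
      is_freq f /\ objective (@transP R k) m f = ((\sum_l m l)%N%:R)%:E)
  /\ (forall f : interv k.-1 -> R,
      is_freq f -> (((\sum_l m l)%N%:R)%:E <= objective (@transP R k) m f)%E).
Proof.
case: k hk m hm => [//|n] _ m m_gt0.
exact: min_objective_deterministic (@transPE R n) (@interv_witnessK n) m m_gt0 _.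
Qed.
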